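(* Let $G$ be a graph and $\{\hat C,\hat I,\hat Q\}$ a partition of $V(G)$ (parts may be empty) such that: (1) $\hat C$ is a clique and $\hat I$ is an independent set; (2) $\hat Q$ is a clique or an independent set, and $|\hat Q|\ge2$; (3) every vertex of $\hat Q$ is adjacent to every vertex of $\hat C$ and to no vertex of $\hat I$; (4) if $\hat Q$ is a clique, every vertex of $\hat C$ has a neighbor in $\hat I$; (5) if $\hat Q$ is an independent set, every vertex of $\hat I$ has a non-neighbor in $\hat C$. Then $G$ is a split graph, and $\hat C$, $\hat I$, $\hat Q$ are respectively its always-clique set, always-independent set, and questioning set.
   Context: A split partition of a graph $G$ is an ordered pair $(C',I')$ of disjoint sets (possibly empty) with $C'\cup I'=V(G)$, $C'$ a clique and $I'$ an independent set; $G$ is a split graph if it has a split partition. The always-clique set of a split graph is the set of vertices lying in $C'$ for every split partition $(C',I')$; the always-independent set is the set of vertices lying in $I'$ for every split partition; the questioning set is the set of vertices $v$ for which there is a split partition with $v\in C'$ and a split partition with $v\in I'$. *)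

From mathcomp Require Import all_boot.
Set Implicit Arguments. Unset Strict Implicit. Unset Printing Implicit Defensive.

Definition simple_graph (T : finType) (e : rel T) : Prop :=
  symmetric e /\ irreflexive e.

Definition is_clique (T : finType) (e : rel T) (A : {set T}) : Prop :=
  forall x y, x \in A -> y \in A -> x != y -> e x y.

Definition is_independent (T : finType) (e : rel T) (A : {set T}) : Prop :=
  forall x y, x \in A -> y \in A -> ~~ e x y.

Definition split_partition (T : finType) (e : rel T) (C I : {set T}) : Prop :=
  [disjoint C & I] /\ C :|: I = [set: T] /\ is_clique e C /\ is_independent e I.

Definition is_split_graph (T : finType) (e : rel T) : Prop :=
  exists C I, split_partition e C I.

Definition in_always_clique (T : finType) (e : rel T) (v : T) : Prop :=
  forall C I, split_partition e C I -> v \in C.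

Definition in_always_independent (T : finType) (e : rel T) (v : T) : Prop :=
  forall C I, split_partition e C I -> v \in I.

Definition in_questioning (T : finType) (e : rel T) (v : T) : Prop :=
  (exists C I, split_partition e C I /\ v \in C) /\
  (exists C I, split_partition e C I /\ v \in I).

From mathcomp Require Import all_boot.
Set Implicit Arguments. Unset Strict Implicit. Unset Printing Implicit Defensive.

(* A split partition (C, I) is determined by C (I is its complement), and two
   rules force membership: an edge never lies inside I, a non-edge never lies
   inside C.  Under conditions (1)-(5) these rules show that every split
   partition (C, I) satisfies Ch ⊆ C and Ih ⊆ I; the argument splits on whether
   Qh is a clique or an independent set and uses |Qh| >= 2 together with
   condition (4), resp. (5).  Conversely, for every S ⊆ Qh that is a clique
   with an independent complement Qh \ S, the pair (Ch ∪ S, Ih ∪ (Qh \ S)) is a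
   split partition; choosing S suitably puts any given q ∈ Qh on either side.
   Hence Ch, Ih, Qh are contained in the three (mutually exclusive) classes of
   vertices, and since they cover V(G) they coincide with them. *)

Section SplitPartitions.
Variables (T : finType) (e : rel T).
Implicit Types (A B C I : {set T}) (x y v : T).

Lemma split_partitionI C I :
  (forall x, (x \in I) = (x \notin C)) -> is_clique e C -> is_independent e I ->
  split_partition e C I.
Proof.
move=> memI cliqueC indepI; split; last split=> //.
  by apply/pred0P => x /=; rewrite memI andbN.
by apply/setP => x; rewrite !inE memI orbN.
Qed.

Lemma split_partition_memI C I x :
  split_partition e C I -> (x \in I) = (x \notin C).
Proof.
case=> disCI [coverCI _]; case xC: (x \in C); first by rewrite (disjointFr disCI).
by have := in_setT x; rewrite -coverCI inE xC.
Qed.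

Lemma split_partition_edge C I x y :
  split_partition e C I -> e x y -> x \in I -> y \in C.
Proof.
move=> sp exy xI; apply: contraT; rewrite -(split_partition_memI _ sp) => yI.
by have [_ [_ [_ indepI]]] := sp; rewrite (negbTE (indepI _ _ xI yI)) in exy.
Qed.

Lemma split_partition_nonedge C I x y :
  split_partition e C I -> x != y -> ~~ e x y -> x \in C -> y \in I.
Proof.
move=> sp xy nexy xC; rewrite (split_partition_memI _ sp); apply: contraNN nexy.
by have [_ [_ [cliqueC _]]] := sp; move=> yC; exact: cliqueC xC yC xy.
Qed.

Lemma clique_subset A B : A \subset B -> is_clique e B -> is_clique e A.
Proof. by move=> /subsetP sAB cliqueB x y /sAB xB /sAB; exact: cliqueB. Qed.

Lemma independent_subset A B :
  A \subset B -> is_independent e B -> is_independent e A.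
Proof. by move=> /subsetP sAB indepB x y /sAB xB /sAB; exact: indepB. Qed.

Lemma clique_sub1 A a : A \subset [set a] -> is_clique e A.
Proof.
by move=> /subsetP sA x y /sA; rewrite inE => /eqP-> /sA; rewrite inE eq_sym => ->.
Qed.

Lemma independent_sub1 A a :
  irreflexive e -> A \subset [set a] -> is_independent e A.
Proof. by move=> irr /subsetP sA x y /sA /set1P-> /sA /set1P->; rewrite irr. Qed.

Lemma always_clique_questioning v :
  in_always_clique e v -> in_questioning e v -> False.
Proof.
move=> vC [_ [C [I [sp vI]]]].
by move: vI; rewrite (split_partition_memI _ sp) (vC _ _ sp).
Qed.

Lemma always_independent_questioning v :
  in_always_independent e v -> in_questioning e v -> False.
Proof.
move=> vI [[C [I [sp vC]]] _].
by move: (vI _ _ sp); rewrite (split_partition_memI _ sp) vC.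
Qed.

Lemma always_clique_independent v :
  is_split_graph e -> in_always_clique e v -> in_always_independent e v -> False.
Proof.
move=> [C [I sp]] vC vI.
by move: (vI _ _ sp); rewrite (split_partition_memI _ sp) (vC _ _ sp).
Qed.

Lemma exclusive_cover_iff A B (D : {set T}) (P Q R : T -> Prop) :
  (forall v, [|| v \in A, v \in B | v \in D]) ->
  (forall v, v \in A -> P v) -> (forall v, v \in B -> Q v) ->
  (forall v, v \in D -> R v) ->
  (forall v, P v -> Q v -> False) -> (forall v, P v -> R v -> False) ->
  (forall v, Q v -> R v -> False) ->
  (forall v, P v <-> v \in A) /\ (forall v, Q v <-> v \in B) /\
  (forall v, R v <-> v \in D).
Proof.
move=> cover AP BQ DR nPQ nPR nQR.
split; [|split] => v; split; try exact: AP; try exact: BQ; try exact: DR;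
  move=> Hv; case/or3P: (cover v) => // Hw; exfalso.
- exact: nPQ Hv (BQ _ Hw).
- exact: nPR Hv (DR _ Hw).
- exact: nPQ (AP _ Hw) Hv.
- exact: nQR Hv (DR _ Hw).
- exact: nPR (AP _ Hw) Hv.
- exact: nQR (BQ _ Hw) Hv.
Qed.

End SplitPartitions.

Record split_config (T : finType) (e : rel T) (Ch Ih Qh : {set T}) : Prop :=
  SplitConfig {
  cfg_sym : symmetric e;
  cfg_irr : irreflexive e;
  cfg_CI : [disjoint Ch & Ih];
  cfg_CQ : [disjoint Ch & Qh];
  cfg_IQ : [disjoint Ih & Qh];
  cfg_cover : Ch :|: Ih :|: Qh = [set: T];
  cfg_C : is_clique e Ch;
  cfg_I : is_independent e Ih;
  cfg_Q : is_clique e Qh \/ is_independent e Qh;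
  cfg_Q2 : 2 <= #|Qh|;
  cfg_QC : forall q c, q \in Qh -> c \in Ch -> e q c;
  cfg_QI : forall q i, q \in Qh -> i \in Ih -> ~~ e q i;
  cfg_Cnbr : is_clique e Qh -> forall c, c \in Ch -> exists2 i, i \in Ih & e c i;
  cfg_Inon : is_independent e Qh -> forall i, i \in Ih -> exists2 c, c \in Ch & ~~ e i c
}.

Section SplitConfig.
Variables (T : finType) (e : rel T) (Ch Ih Qh : {set T}).
Hypothesis cfg : split_config e Ch Ih Qh.

Lemma config_cover x : [|| x \in Ch, x \in Ih | x \in Qh].
Proof. by have := in_setT x; rewrite -(cfg_cover cfg) !inE orbA. Qed.

Variant part_spec (x : T) : bool -> bool -> bool -> Prop :=
  | PartC of x \in Ch : part_spec x true false false
  | PartI of x \in Ih : part_spec x false true false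
  | PartQ of x \in Qh : part_spec x false false true.

Lemma partP x : part_spec x (x \in Ch) (x \in Ih) (x \in Qh).
Proof.
case/or3P: (config_cover x) => xP.
- by rewrite (disjointFr (cfg_CI cfg) xP) (disjointFr (cfg_CQ cfg) xP) xP; exact: PartC.
- by rewrite (disjointFl (cfg_CI cfg) xP) (disjointFr (cfg_IQ cfg) xP) xP; exact: PartI.
- by rewrite (disjointFl (cfg_CQ cfg) xP) (disjointFl (cfg_IQ cfg) xP) xP; exact: PartQ.
Qed.

Lemma neq_parts x y : (x \in Ch) || (x \in Ih) -> y \in Qh -> x != y.
Proof. by move=> xCI yQ; apply: contraTneq xCI => ->; case: partP yQ. Qed.

Lemma neq_CI x y : x \in Ch -> y \in Ih -> x != y.
Proof. by move=> xC; apply: contraTneq => <-; case: partP xC. Qed.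

Lemma Ch_sub_C C I : split_partition e C I -> {subset Ch <= C}.
Proof.
move=> sp c cCh; apply: contraT; rewrite -(split_partition_memI _ sp) => cI.
have QC q : q \in Qh -> q \in C.
  move=> qQ; apply: split_partition_edge sp _ cI.
  by rewrite (cfg_sym cfg) (cfg_QC cfg).
have [_ [_ [cliqueC _]]] := sp.
have [q1 [q2 [q1Q q2Q q12]]] := card_gt1P (cfg_Q2 cfg).
case: (cfg_Q cfg) => [Qclique | Qindep].
- (* c has a neighbour i in Ih; i is in C but not adjacent to q1 in C *)
  have [i iIh ci] := cfg_Cnbr cfg Qclique cCh.
  have iC := split_partition_edge sp ci cI.
  have iq1 : i != q1 by apply: neq_parts; rewrite // iIh orbT.
  have := cliqueC _ _ iC (QC _ q1Q) iq1.
  by rewrite (cfg_sym cfg) (negbTE (cfg_QI cfg q1Q iIh)).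
- (* two non-adjacent vertices of Qh would both lie in C *)
  by have := cliqueC _ _ (QC _ q1Q) (QC _ q2Q) q12; rewrite (negbTE (Qindep _ _ q1Q q2Q)).
Qed.

Lemma Ih_sub_I C I : split_partition e C I -> {subset Ih <= I}.
Proof.
move=> sp i iIh; rewrite (split_partition_memI _ sp); apply/negP => iC.
have QI q : q \in Qh -> q \in I.
  move=> qQ; apply: split_partition_nonedge sp _ _ iC.
    by apply: neq_parts; rewrite // iIh orbT.
  by rewrite (cfg_sym cfg) (cfg_QI cfg).
have [_ [_ [_ indepI]]] := sp.
have [q1 [q2 [q1Q q2Q q12]]] := card_gt1P (cfg_Q2 cfg).
case: (cfg_Q cfg) => [Qclique | Qindep].
- (* two adjacent vertices of Qh would both lie in I *)
  by have := indepI _ _ (QI _ q1Q) (QI _ q2Q); rewrite (Qclique _ _ q1Q q2Q q12).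
- (* i has a non-neighbour c in Ch, which would have to lie in I *)
  have [c cCh ic] := cfg_Inon cfg Qindep iIh.
  have i_neq_c : i != c by rewrite eq_sym neq_CI.
  have cI := split_partition_nonedge sp i_neq_c ic iC.
  by move: cI; rewrite (split_partition_memI _ sp) (Ch_sub_C sp cCh).
Qed.

Lemma split_with (S : {set T}) :
  S \subset Qh -> is_clique e S -> is_independent e (Qh :\: S) ->
  split_partition e (Ch :|: S) (Ih :|: (Qh :\: S)).
Proof.
move=> /subsetP sSQ cliqueS indepQS; apply: split_partitionI.
- move=> x; rewrite !inE; case: partP => xP /=; rewrite ?andbF ?andbT //.
  by apply/esym/negP => /sSQ; case: partP xP.
- move=> x y; rewrite !inE => /orP[xC|xS] /orP[yC|yS].
  + exact: (cfg_C cfg).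
  + by rewrite (cfg_sym cfg) (cfg_QC cfg) ?sSQ.
  + by rewrite (cfg_QC cfg) ?sSQ.
  + exact: cliqueS.
- have /subsetP sQSQ := subsetDl Qh S.
  move=> x y; rewrite !in_setU => /orP[xI|xQS] /orP[yI|yQS].
  + exact: (cfg_I cfg).
  + by rewrite (cfg_sym cfg) (cfg_QI cfg) ?sQSQ.
  + by rewrite (cfg_QI cfg) ?sQSQ.
  + exact: indepQS.
Qed.

(* Every vertex of Qh can be put on either side of some split partition:
   take S = Qh or Qh \ {q} when Qh is a clique, S = {q} or ∅ when it is
   independent. *)
Lemma Qh_questioning q : q \in Qh -> in_questioning e q.
Proof.
move=> qQ; have irr := cfg_irr cfg.
case: (cfg_Q cfg) => [Qclique | Qindep]; split.
- exists (Ch :|: Qh), (Ih :|: (Qh :\: Qh)); split; last by rewrite inE qQ orbT.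
  apply: split_with => //; apply: (independent_sub1 (a := q) irr).
  by rewrite setDv sub0set.
- exists (Ch :|: (Qh :\ q)), (Ih :|: (Qh :\: (Qh :\ q))).
  split; last by rewrite !inE eqxx qQ orbT.
  apply: split_with; first exact: subD1set.
    exact: clique_subset (subD1set Qh q) Qclique.
  apply: (independent_sub1 (a := q) irr).
  by rewrite setDDr setDv set0U subsetIr.
- exists (Ch :|: [set q]), (Ih :|: (Qh :\: [set q]));
    split; last by rewrite !inE eqxx orbT.
  apply: split_with; first by rewrite sub1set.
    exact: clique_sub1 (subxx _).
  exact: independent_subset (subsetDl _ _) Qindep.
- exists (Ch :|: set0), (Ih :|: (Qh :\: set0)); split; last by rewrite !inE qQ orbT.
  apply: split_with; first exact: sub0set.
    exact: clique_sub1 (sub0set [set q]).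
  by rewrite setD0.
Qed.

End SplitConfig.

Theorem lemma8p5 (T : finType) (e : rel T) (Ch Ih Qh : {set T}) :
  simple_graph e ->
  (* {Ch, Ih, Qh} partition V(G) (parts may be empty) *)
  [disjoint Ch & Ih] -> [disjoint Ch & Qh] -> [disjoint Ih & Qh] ->
  Ch :|: Ih :|: Qh = [set: T] ->
  (* (1) *)
  is_clique e Ch -> is_independent e Ih ->
  (* (2) *)
  (is_clique e Qh \/ is_independent e Qh) -> 2 <= #|Qh| ->
  (* (3) *)
  (forall q c, q \in Qh -> c \in Ch -> e q c) ->
  (forall q i, q \in Qh -> i \in Ih -> ~~ e q i) ->
  (* (4) *)
  (is_clique e Qh -> forall c, c \in Ch -> exists2 i, i \in Ih & e c i) ->
  (* (5) *)
  (is_independent e Qh -> forall i, i \in Ih -> exists2 c, c \in Ch & ~~ e i c) ->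
  is_split_graph e /\
  (forall v, in_always_clique e v <-> v \in Ch) /\
  (forall v, in_always_independent e v <-> v \in Ih) /\
  (forall v, in_questioning e v <-> v \in Qh).
Proof.
move=> [sym irr] dCI dCQ dIQ cover cliqueC indepI Qtype Q2 QC QI Cnbr Inon.
have cfg : split_config e Ch Ih Qh by constructor.
have [q qQ] : exists q, q \in Qh.
  by have [q [_ [qQ _ _]]] := card_gt1P Q2; exists q.
have splitG : is_split_graph e.
  by have [[C [I [sp _]]] _] := Qh_questioning cfg qQ; exists C, I.
split=> //; apply: exclusive_cover_iff.
- exact: config_cover cfg.
- by move=> v vC C I sp; exact: (Ch_sub_C cfg sp vC).
- by move=> v vI C I sp; exact: (Ih_sub_I cfg sp vI).
- exact: Qh_questioning cfg.
- by move=> v; apply: always_clique_independent.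
- by move=> v; apply: always_clique_questioning.
- by move=> v; apply: always_independent_questioning.
Qed.
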